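(* Let $\{\mathcal G,(\Gamma_0,\Gamma_1),(\widetilde\Gamma_0,\widetilde\Gamma_1)\}$ be a triple for the adjoint pair $\{S,\widetilde S\}$ satisfying (G), (D), (M), and assume $\rho(A_0)\neq\emptyset$ (equivalently $\rho(\widetilde A_0)\neq\emptyset$). Let $\gamma,\widetilde\gamma$ be the $\gamma$-fields and $M,\widetilde M$ the Weyl functions. Then for all $\lambda\in\rho(A_0)$ and $\mu\in\rho(\widetilde A_0)$: (i) $M(\lambda)$ and $\widetilde M(\mu)$ are operators in $\mathcal G$ with dense domains $\operatorname{dom}M(\lambda)=\operatorname{ran}\Gamma_0$, $\operatorname{dom}\widetilde M(\mu)=\operatorname{ran}\widetilde\Gamma_0$, and $\operatorname{ran}M(\lambda)\subset\operatorname{ran}\Gamma_1$, $\operatorname{ran}\widetilde M(\mu)\subset\operatorname{ran}\widetilde\Gamma_1$; (ii) $M(\lambda)\subset\widetilde M(\overline\lambda)^*$ and $\widetilde M(\overline\lambda)\subset M(\lambda)^*$, and $M(\lambda)-\widetilde M(\mu)^*=(\lambda-\overline\mu)\widetilde\gamma(\mu)^*\gamma(\lambda)$, $M(\lambda)^*-\widetilde M(\mu)=(\overline\lambda-\mu)\gamma(\lambda)^*\widetilde\gamma(\mu)$; (iii) for fixed $\lambda_0,\mu_0\in\rho(A_0)\cap\rho(\widetilde A_0)$, $M(\lambda)=\widetilde M(\lambda_0)^*+\widetilde\gamma(\lambda_0)^*(\lambda-\overline{\lambda_0})(I+(\lambda-\lambda_0)(A_0-\lambda)^{-1})\gamma(\lambda_0)$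 and $\widetilde M(\mu)=M(\mu_0)^*+\gamma(\mu_0)^*(\mu-\overline{\mu_0})(I+(\mu-\mu_0)(\widetilde A_0-\mu)^{-1})\widetilde\gamma(\mu_0)$, i.e. $M$ and $\widetilde M$ are the sum of a fixed closed (possibly unbounded) operator and a bounded holomorphic operator function.
   Context: Let $\mathfrak H$ be a separable Hilbert space. An adjoint pair $\{S,\widetilde S\}$ consists of densely defined closed operators $S,\widetilde S$ in $\mathfrak H$ with $(Sf,g)=(f,\widetilde Sg)$ for all $f\in\operatorname{dom}S$, $g\in\operatorname{dom}\widetilde S$. Fix operators $T\subset S^*$ and $\widetilde T\subset\widetilde S^*$ which are cores, i.e. $\overline T=S^*$ and $\overline{\widetilde T}=\widetilde S^*$. A triple $\{\mathcal G,(\Gamma_0,\Gamma_1),(\widetilde\Gamma_0,\widetilde\Gamma_1)\}$ for $\{S,\widetilde S\}$ consists of a Hilbert space $\mathcal G$ and linear maps $\Gamma_0,\Gamma_1:\operatorname{dom}T\to\mathcal G$, $\widetilde\Gamma_0,\widetilde\Gamma_1:\operatorname{dom}\widetilde T\to\mathcal G$. Put $A_0:=T\upharpoonright\ker\Gamma_0$ and $\widetilde A_0:=\widetilde T\upharpoonright\ker\widetilde\Gamma_0$. Conditions: (G) $(Tf,g)_{\mathfrak H}-(f,\widetilde Tg)_{\mathfrak H}=(\Gamma_1f,\widetilde\Gamma_0g)_{\mathcal G}-(\Gamma_0f,\widetilde\Gamma_1g)_{\mathcal G}$ for all $f\in\operatorname{dom}T$, $g\in\operatorname{dom}\widetilde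 T$; (D) $\operatorname{ran}\Gamma_0$ and $\operatorname{ran}\widetilde\Gamma_0$ are dense in $\mathcal G$; (M) $A_0^*=\widetilde A_0$ and $\widetilde A_0^*=A_0$. For $\lambda\in\rho(A_0)$ one has $\operatorname{dom}T=\ker\Gamma_0\dotplus\ker(T-\lambda)$, so $\Gamma_0\upharpoonright\ker(T-\lambda)$ is injective; similarly for $\widetilde T$. The $\gamma$-fields are $\gamma(\lambda):=(\Gamma_0\upharpoonright\ker(T-\lambda))^{-1}$, $\lambda\in\rho(A_0)$, and $\widetilde\gamma(\mu):=(\widetilde\Gamma_0\upharpoonright\ker(\widetilde T-\mu))^{-1}$, $\mu\in\rho(\widetilde A_0)$; the Weyl functions are $M(\lambda):=\Gamma_1\gamma(\lambda)$ and $\widetilde M(\mu):=\widetilde\Gamma_1\widetilde\gamma(\mu)$. *)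

From mathcomp Require Import all_boot all_order all_algebra.
From mathcomp Require Import reals.
From mathcomp.real_closed Require Export complex.
Import Order.TTheory GRing.Theory Num.Theory.

Set Implicit Arguments.
Unset Strict Implicit.
Unset Printing Implicit Defensive.

Local Open Scope ring_scope.

(* Convention: ip is linear in the first and antilinear in the second  *)
(* argument, as in (Tf,g) - (f,T~g) of the paper.                      *)
Section InnerProduct.
Variable R : realType.
Variable V : lmodType R[i].
Variable ip : V -> V -> R[i].

Definition hnorm (x : V) : R := Num.sqrt (complex.Re (ip x x)).

Definition cvg_to (u : nat -> V) (x : V) : Prop :=
  forall e : R, 0 < e -> exists N : nat, forall n : nat, (N <= n)%N ->
    hnorm (u n - x) < e.

Definition cauchy_seq (u : nat -> V) : Prop :=
  forall e : R, 0 < e -> exists N : nat, forall m n : nat,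
    (N <= m)%N -> (N <= n)%N -> hnorm (u m - u n) < e.

Definition dense (A : V -> Prop) : Prop :=
  forall (x : V) (e : R), 0 < e -> exists a, A a /\ hnorm (x - a) < e.

Record is_hilbert : Prop := IsHilbert {
  ip_linear : forall (a : R[i]) (x y z : V), ip (a *: x + y) z = a * ip x z + ip y z;
  ip_hermitian : forall x y : V, ip y x = (ip x y)^*;
  ip_ge0 : forall x : V, 0 <= ip x x;
  ip_eq0 : forall x : V, ip x x = 0 -> x = 0;
  ip_complete : forall u : nat -> V, cauchy_seq u -> exists x, cvg_to u x }.

Definition separable : Prop :=
  exists s : nat -> V, dense (fun x => exists n, x = s n).

End InnerProduct.

(* (Possibly unbounded, possibly multivalued) linear relations, given  *)
(* by their graphs; an operator is a single-valued linear relation.    *)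
(* Operator equality / inclusion = equality / inclusion of graphs.     *)
Definition op (V W : Type) := V -> W -> Prop.

Section Operators.
Variable R : realType.

Definition op_le (V W : Type) (A B : op V W) : Prop := forall x y, A x y -> B x y.
Definition op_eq (V W : Type) (A B : op V W) : Prop := forall x y, A x y <-> B x y.

Definition dom (V W : Type) (A : op V W) : V -> Prop := fun x => exists y, A x y.
Definition ran (V W : Type) (A : op V W) : W -> Prop := fun y => exists x, A x y.

Definition single_valued (V W : Type) (A : op V W) : Prop :=
  forall x y1 y2, A x y1 -> A x y2 -> y1 = y2.

Definition linear_rel (V W : lmodType R[i]) (A : op V W) : Prop :=
  A 0 0 /\ forall (a : R[i]) x1 y1 x2 y2, A x1 y1 -> A x2 y2 ->
    A (a *: x1 + x2) (a *: y1 + y2).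

Definition is_operator (V W : lmodType R[i]) (A : op V W) : Prop :=
  linear_rel A /\ single_valued A.

Definition linear_on (V W : lmodType R[i]) (D : V -> Prop) (f : V -> W) : Prop :=
  forall (a : R[i]) x y, D x -> D y -> f (a *: x + y) = a *: f x + f y.

Definition image_on (V W : Type) (D : V -> Prop) (f : V -> W) : W -> Prop :=
  fun y => exists x, D x /\ y = f x.

Definition graph_on (V W : Type) (D : V -> Prop) (f : V -> W) : op V W :=
  fun x y => D x /\ y = f x.

Definition op_id (V : Type) : op V V := fun x y => y = x.
Definition op_inv (V W : Type) (A : op V W) : op W V := fun y x => A x y.
Definition op_comp (U V W : Type) (B : op V W) (A : op U V) : op U W :=
  fun x z => exists y, A x y /\ B y z.
Definition op_sum (V W : lmodType R[i]) (A B : op V W) : op V W :=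
  fun x y => exists y1 y2, A x y1 /\ B x y2 /\ y = y1 + y2.
Definition op_diff (V W : lmodType R[i]) (A B : op V W) : op V W :=
  fun x y => exists y1 y2, A x y1 /\ B x y2 /\ y = y1 - y2.
Definition op_scale (V W : lmodType R[i]) (c : R[i]) (A : op V W) : op V W :=
  fun x y => exists y1, A x y1 /\ y = c *: y1.

Variables (V W : lmodType R[i]) (ipV : V -> V -> R[i]) (ipW : W -> W -> R[i]).

Definition adjoint (A : op V W) : op W V :=
  fun y z => forall x w, A x w -> ipW w y = ipV x z.

Definition op_closure (A : op V W) : op V W :=
  fun x y => exists (u : nat -> V) (v : nat -> W),
    (forall n, A (u n) (v n)) /\ cvg_to ipV u x /\ cvg_to ipW v y.

Definition closed_op (A : op V W) : Prop := op_le (op_closure A) A.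

Definition densely_defined (A : op V W) : Prop := dense ipV (dom A).

Definition bounded_op (A : op V W) : Prop :=
  exists c : R, forall x y, A x y -> hnorm ipW y <= c * hnorm ipV x.

End Operators.

Section Spectral.
Variable R : realType.
Variables (V : lmodType R[i]) (ip : V -> V -> R[i]).

Definition resolvent (A : op V V) (lam : R[i]) : op V V :=
  op_inv (op_diff A (op_scale lam (@op_id V))).

Definition resolvent_set (A : op V V) (lam : R[i]) : Prop :=
  single_valued (resolvent A lam) /\ (forall x, dom (resolvent A lam) x) /\
  bounded_op ip ip (resolvent A lam).

End Spectral.

Section BoundaryTriple.
Variable R : realType.
Variables (H G : lmodType R[i]).

Definition A0_of (T : op H H) (Gam0 : H -> G) : op H H :=
  fun f y => T f y /\ Gam0 f = 0.

Definition gamma_field (T : op H H) (Gam0 : H -> G) (lam : R[i]) : op G H :=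
  fun h f => T f (lam *: f) /\ h = Gam0 f.

Definition weyl_fun (T : op H H) (Gam0 Gam1 : H -> G) (lam : R[i]) : op G G :=
  op_comp (graph_on (dom T) Gam1) (gamma_field T Gam0 lam).

End BoundaryTriple.

(* Everything comes from the Green identity (G) evaluated on defect vectors:
   for g in ker (T - lam) and g' in ker (T~ - mu),
     (Gam~0 g', Gam1 g) = (Gam~1 g', Gam0 g) + (conj lam - mu) (g', g).
   For mu = conj lam this gives M(lam) <= adjoint M~(conj lam).  The
   identities in (ii) and (iii) also need adjoint gamma~(mu) to be everywhere
   defined: (A~0 - mu)^-1 is bounded and everywhere defined, hence so is its
   adjoint (Riesz representation, proved through nearest points in a closed
   convex set), and by (M) that adjoint is (A0 - conj mu)^-1, which gives
   adjoint gamma~(mu) = Gam1 (A0 - conj mu)^-1.  Each identity is then checked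
   by pairing with the dense set Gam~0 (ker (T~ - mu)), using
   gamma(lam) = (I + (lam - lam0) (A0 - lam)^-1) gamma(lam0). *)

From mathcomp Require Import all_boot all_order all_algebra.
From mathcomp Require Import reals.
From mathcomp.real_closed Require Import complex.
From mathcomp Require Import ring lra.
From mathcomp Require Import classical_sets boolp.
Import Order.TTheory GRing.Theory Num.Theory.
Local Open Scope ring_scope.
Set Implicit Arguments.
Unset Strict Implicit.
Unset Printing Implicit Defensive.

Lemma complex_ge0_real (R : rcfType) (w : R[i]) : 0 <= w -> w = (complex.Re w)%:C%C.
Proof. by case: w => a b; rewrite lecE /= => /andP[/eqP -> _]. Qed.

Lemma conjCB (R : rcfType) (a b : R[i]) : (a - b)^* = a^* - b^*.
Proof. exact: rmorphB. Qed.

Section InnerProductSpace.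
Variables (R : realType) (V : lmodType R[i]) (ip : V -> V -> R[i]).
Hypothesis hV : is_hilbert ip.

Lemma ip0l z : ip 0 z = 0.
Proof.
have := ip_linear hV 1 0 0 z; rewrite scaler0 addr0 mul1r.
by move/(congr1 (fun w => w - ip 0 z)); rewrite subrr addrK => <-.
Qed.

Lemma ipDl x y z : ip (x + y) z = ip x z + ip y z.
Proof. by have := ip_linear hV 1 x y z; rewrite scale1r mul1r. Qed.

Lemma ipZl a x z : ip (a *: x) z = a * ip x z.
Proof. by have := ip_linear hV a x 0 z; rewrite addr0 ip0l addr0. Qed.

Lemma ipNl x z : ip (- x) z = - ip x z.
Proof. by rewrite -scaleN1r ipZl mulN1r. Qed.

Lemma ipBl x y z : ip (x - y) z = ip x z - ip y z.
Proof. by rewrite ipDl ipNl. Qed.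

Lemma ip0r z : ip z 0 = 0.
Proof. by rewrite (ip_hermitian hV) ip0l conjC0. Qed.

Lemma ipDr x y z : ip z (x + y) = ip z x + ip z y.
Proof. by rewrite !(ip_hermitian hV _ z) ipDl rmorphD. Qed.

Lemma ipZr a x z : ip z (a *: x) = a^* * ip z x.
Proof. by rewrite (ip_hermitian hV _ z) (ip_hermitian hV x z) ipZl rmorphM. Qed.

Lemma ipNr x z : ip z (- x) = - ip z x.
Proof. by rewrite -scaleN1r ipZr conjCN1 mulN1r. Qed.

Lemma ipBr x y z : ip z (x - y) = ip z x - ip z y.
Proof. by rewrite ipDr ipNr. Qed.

Definition sqnorm (x : V) : R := complex.Re (ip x x).

Lemma ip_sqnorm x : ip x x = (sqnorm x)%:C%C.
Proof. exact: complex_ge0_real (ip_ge0 hV x). Qed.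

Lemma sqnorm_ge0 x : 0 <= sqnorm x.
Proof. by have := ip_ge0 hV x; rewrite ip_sqnorm lecR. Qed.

Lemma sqnorm_eq0 x : sqnorm x = 0 -> x = 0.
Proof. by move=> h; apply: (ip_eq0 hV); rewrite ip_sqnorm h. Qed.

Lemma sqnormD x y : sqnorm (x + y) = sqnorm x + sqnorm y + 2 * complex.Re (ip x y).
Proof.
rewrite /sqnorm ipDl !ipDr (ip_hermitian hV x y) !ip_sqnorm.
by case: (ip x y) => a b /=; ring.
Qed.

Lemma sqnormN x : sqnorm (- x) = sqnorm x.
Proof. by rewrite /sqnorm ipNl ipNr opprK. Qed.

Lemma sqnorm_double z : sqnorm (z + z) = 4 * sqnorm z.
Proof. by rewrite sqnormD -/(sqnorm z); ring. Qed.

Lemma hnorm_ge0 x : 0 <= hnorm ip x.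
Proof. exact: sqrtr_ge0. Qed.

Lemma hnorm_sqr x : hnorm ip x ^+ 2 = sqnorm x.
Proof. by rewrite sqr_sqrtr // sqnorm_ge0. Qed.

Lemma hnorm_lt x e : 0 < e -> (hnorm ip x < e) = (sqnorm x < e ^+ 2).
Proof. by move=> e0; rewrite -ltr_sqr ?nnegrE ?hnorm_sqr ?hnorm_ge0 ?ltW. Qed.

Lemma cauchy_schwarz x y : ip x y * ip y x <= ip x x * ip y y.
Proof.
have [->|ny0] := eqVneq y 0; first by rewrite !ip0r !ip0l !mulr0.
set p := ip x y; set q := ip y y.
have q0 : q != 0 by apply: contra_neq ny0 => /(ip_eq0 hV).
have qgt : 0 < q by rewrite lt_def q0 (ip_ge0 hV).
have qc : q^* = q by rewrite geC0_conj // ltW.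
have hyx : ip y x = p^* by rewrite (ip_hermitian hV).
(* expand 0 <= (x - t y, x - t y) at the minimising t = p / q *)
set t := p / q.
have tc : t^* = p^* / q by rewrite /t rmorphM fmorphV -[in RHS]qc.
have := ip_ge0 hV (x - t *: y).
rewrite !ipBl !ipBr !ipZl !ipZr hyx -/p -/q tc.
have -> : ip x x - p^* / q * p - (t * p^* - t * (p^* / q * q))
    = (ip x x * q - p * p^*) / q by rewrite /t; field.
by rewrite pmulr_lge0 ?invr_gt0 // subr_ge0 mulrC.
Qed.

Lemma sqr_ip_le x y : complex.Re (ip x y * (ip x y)^*) <= sqnorm x * sqnorm y.
Proof.
have := cauchy_schwarz x y; rewrite (ip_hermitian hV x y) !ip_sqnorm.
by case: (ip x y) => a b; rewrite lecE /= => /andP[_]; rewrite mulr0 subr0.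
Qed.

Lemma Re_ip_le x y : complex.Re (ip x y) <= hnorm ip x * hnorm ip y.
Proof.
have := sqr_ip_le x y; rewrite -!hnorm_sqr -exprMn.
have := mulr_ge0 (hnorm_ge0 x) (hnorm_ge0 y).
by case: (ip x y) => a b /=; rewrite !expr2 => *; nra.
Qed.

Lemma hnorm_triangle x y : hnorm ip (x + y) <= hnorm ip x + hnorm ip y.
Proof.
rewrite -ler_sqr ?nnegrE ?addr_ge0 ?hnorm_ge0 // hnorm_sqr sqnormD -!hnorm_sqr.
by have := Re_ip_le x y; nra.
Qed.

Lemma parallelogram x y :
  sqnorm (x + y) + sqnorm (x - y) = 2 * sqnorm x + 2 * sqnorm y.
Proof. by rewrite !sqnormD sqnormN ipNr; case: (ip x y) => a b /=; ring. Qed.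

Lemma cvg_to_sqnorm u x : cvg_to ip u x ->
  forall e, 0 < e -> exists N, forall n, (N <= n)%N -> sqnorm (u n - x) < e.
Proof.
move=> cvu e e0; have se : 0 < Num.sqrt e by rewrite sqrtr_gt0.
have [N hN] := cvu _ se.
by exists N => n /hN; rewrite hnorm_lt ?sqrtr_gt0 // sqr_sqrtr ?ltW.
Qed.

Lemma dense_orthogonal_eq0 (D : V -> Prop) v :
  dense ip D -> (forall x, D x -> ip x v = 0) -> v = 0.
Proof.
move=> dD Dv; apply: sqnorm_eq0; apply/eqP; rewrite eq_le sqnorm_ge0 andbT.
rewrite leNgt; apply/negP => v0.
have sv : 0 < Num.sqrt (sqnorm v) by rewrite sqrtr_gt0.
have [a [Da]] := dD v _ sv.
rewrite hnorm_lt ?sqrtr_gt0 // sqr_sqrtr ?ltW // sqnormD sqnormN ipNr.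
rewrite (ip_hermitian hV a v) Dv // conjC0 oppr0 mulr0 addr0.
by have := sqnorm_ge0 a; lra.
Qed.

Lemma ip_eq0_of_minimal v w :
  (forall t, sqnorm v <= sqnorm (v - t *: w)) -> ip v w = 0.
Proof.
(* t = p / (|w|^2 + 1) makes the increment negative unless p = 0 *)
move=> vmin; set p := ip v w; set s := (sqnorm w + 1)^-1.
have w0 := sqnorm_ge0 w.
have s0 : 0 < s by rewrite invr_gt0 ltr_wpDl.
have sw : s * (sqnorm w + 1) = 1 by rewrite mulVf // gt_eqF // ltr_wpDl.
have := vmin (s%:C%C * p).
rewrite sqnormD sqnormN /sqnorm ipNr ipZl !ipZr -/p (ip_sqnorm w).
case: p => a b /= hle.
have h : s * (1 + s) * (a ^+ 2 + b ^+ 2) <= 0 by nra.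
have ab : a ^+ 2 + b ^+ 2 <= 0.
  by move: h; rewrite pmulr_rle0 // mulr_gt0 // ltr_wpDr // ltW.
by congr (_ +i* _)%C; apply/eqP; rewrite -sqrf_eq0 eq_le sqr_ge0 andbT; nra.
Qed.

End InnerProductSpace.

Lemma eventually_inv_lt (R : realType) (e : R) : 0 < e ->
  exists N : nat, forall n, (N <= n)%N -> n.+1%:R^-1 < e.
Proof.
move=> e0; exists (Num.bound e^-1) => n Nn.
rewrite invf_plt ?posrE ?ltr0Sn //.
apply: lt_le_trans (archi_boundP _) _; first by rewrite invr_ge0 ltW.
by rewrite ler_nat ltnW.
Qed.

Section NearestPoint.
Variables (R : realType) (V : lmodType R[i]) (ip : V -> V -> R[i]).
Hypothesis hV : is_hilbert ip.
Variables (K : V -> Prop) (x0 : V).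
Hypothesis K_midpoint : forall k1 k2, K k1 -> K k2 -> K (2^-1 *: (k1 + k2)).
Local Notation sqnorm := (sqnorm ip).
Local Notation hnorm := (hnorm ip).

Lemma minimizing_seq_cauchy (d : R) (ks : nat -> V) : 0 <= d ->
  (forall k, K k -> d <= hnorm (x0 - k)) -> (forall n, K (ks n)) ->
  (forall n, hnorm (x0 - ks n) < d + n.+1%:R^-1) -> cauchy_seq ip ks.
Proof.
move=> d0 dle Kks hks e e0.
have [|N hN] := @eventually_inv_lt _ (e ^+ 2 / (8 * d + 4)).
  by rewrite divr_gt0 ?exprn_gt0 // ltr_wpDl ?mulr_ge0.
exists N => m n Nm Nn; rewrite (hnorm_lt hV) //.
set mid := 2^-1 *: (ks n + ks m).
have two_mid : mid + mid = ks n + ks m.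
  by rewrite -scalerDl -[X in _ = X]scale1r [in RHS](splitr 1) !mul1r.
have hmid : (x0 - ks n) + (x0 - ks m) = (x0 - mid) + (x0 - mid).
  by rewrite addrACA [RHS]addrACA -!opprD two_mid.
have := parallelogram hV (x0 - ks n) (x0 - ks m).
have -> : x0 - ks n - (x0 - ks m) = ks m - ks n.
  by rewrite opprB addrC addrA subrK.
rewrite hmid (sqnorm_double hV).
rewrite -(hnorm_sqr hV (x0 - mid)) -(hnorm_sqr hV (x0 - ks n)) -(hnorm_sqr hV (x0 - ks m)).
have := dle _ (K_midpoint (Kks n) (Kks m)); have := hks n; have := hks m.
have := hN m Nm; have := hN n Nn; have := hnorm_ge0 ip (x0 - ks n).
have := hnorm_ge0 ip (x0 - ks m).
rewrite -/mid; set a := m.+1%:R^-1; set b := n.+1%:R^-1; set r := e ^+ 2 / _.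
have a1 : a <= 1 by rewrite invf_le1 ?ler1n ?ltr0Sn.
have b1 : b <= 1 by rewrite invf_le1 ?ler1n ?ltr0Sn.
have a0 : 0 <= a by rewrite invr_ge0.
have b0 : 0 <= b by rewrite invr_ge0.
move=> A0 B0 hb ha hA hB hM hpar.
set A := hnorm (x0 - ks n) in A0 hB hpar; set B := hnorm (x0 - ks m) in B0 hA hpar.
set M := hnorm (x0 - mid) in hM hpar.
(* |k_m - k_n|^2 = 2 A^2 + 2 B^2 - 4 M^2 <= 2 (d + b)^2 + 2 (d + a)^2 - 4 d^2 *)
have hA2 : A ^+ 2 <= (d + b) ^+ 2 by rewrite ler_sqr ?nnegrE ?addr_ge0 // ltW.
have hB2 : B ^+ 2 <= (d + a) ^+ 2 by rewrite ler_sqr ?nnegrE ?addr_ge0 // ltW.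
have hM2 : d ^+ 2 <= M ^+ 2 by rewrite ler_sqr ?nnegrE // (le_trans d0).
have er : e ^+ 2 = (8 * d + 4) * r.
  by rewrite mulrC divfK // gt_eqF // ltr_wpDl ?mulr_ge0.
rewrite er; nra.
Qed.

Local Open Scope classical_set_scope.

Lemma nearest_point (k0 : V) : K k0 ->
  (forall u k, (forall n, K (u n)) -> cvg_to ip u k -> K k) ->
  exists k, K k /\ forall k', K k' -> hnorm (x0 - k) <= hnorm (x0 - k').
Proof.
move=> Kk0 K_closed.
set dists := [set r | exists k, K k /\ r = hnorm (x0 - k)].
have hinf : has_inf dists.
  split; first by exists (hnorm (x0 - k0)), k0.
  by exists 0 => r [k [_ ->]]; apply: hnorm_ge0.
set d := inf dists.
have dle k : K k -> d <= hnorm (x0 - k) by move=> Kk; apply: (ge_inf hinf.2); exists k.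
have d0 : 0 <= d by apply: lb_le_inf hinf.1 _ => r [k [_ ->]]; apply: hnorm_ge0.
have near_inf n : exists k, K k /\ hnorm (x0 - k) < d + n.+1%:R^-1.
  have n0 : 0 < n.+1%:R^-1 :> R by rewrite invr_gt0 ltr0Sn.
  by have [_ [k [Kk ->]] ?] := inf_adherent n0 hinf; exists k.
have [ks hks] := choice near_inf.
have [k cvk] := ip_complete hV (minimizing_seq_cauchy d0 dle (fun n => (hks n).1)
  (fun n => (hks n).2)).
exists k; split; first exact: K_closed (fun n => (hks n).1) cvk.
move=> k' Kk'; apply: le_trans (dle _ Kk').
suff near_d (e : R) : 0 < e -> hnorm (x0 - k) <= d + e by apply/ler_addgt0Pr.
move=> e0; have e20 : 0 < e / 2 by rewrite divr_gt0.
have [N1 hN1] := eventually_inv_lt e20; have [N2 hN2] := cvk _ e20.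
set n := maxn N1 N2; have := hN1 n (leq_maxl _ _); have := hN2 n (leq_maxr _ _).
have := (hks n).2; have := hnorm_triangle hV (x0 - ks n) (ks n - k).
rewrite addrA subrK; set i := (n.+1%:R^-1 : R); set h := e / 2.
have -> : e = h + h by rewrite /h -splitr.
lra.
Qed.

End NearestPoint.

Section Riesz.
Variables (R : realType) (V : lmodType R[i]) (ip : V -> V -> R[i]).
Hypothesis hV : is_hilbert ip.
Variables (phi : V -> R[i]) (C : R).
Hypothesis phi_linear : forall a x y, phi (a *: x + y) = a * phi x + phi y.
Hypothesis phi_bounded : forall y, complex.Re (phi y * (phi y)^*) <= C * sqnorm ip y.
Hypothesis C_ge0 : 0 <= C.

Let phi0 : phi 0 = 0.
Proof.
have := phi_linear 1 0 0; rewrite scaler0 addr0 mul1r.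
by move/(congr1 (fun w => w - phi 0)); rewrite subrr addrK => <-.
Qed.

Let phiD x y : phi (x + y) = phi x + phi y.
Proof. by have := phi_linear 1 x y; rewrite scale1r mul1r. Qed.

Let phiZ a x : phi (a *: x) = a * phi x.
Proof. by have := phi_linear a x 0; rewrite addr0 phi0 addr0. Qed.

Let phiB x y : phi (x - y) = phi x - phi y.
Proof. by rewrite -scaleN1r phiD phiZ mulN1r. Qed.

Lemma functional_ker_closed u k : (forall n, phi (u n) = 0) -> cvg_to ip u k -> phi k = 0.
Proof.
move=> phiu cvu; set z := phi k.
have zz : 0 <= z * z^* by apply: mul_conjC_ge0.
suff : complex.Re (z * z^*) <= 0.
  move=> zz0; have re0 : complex.Re (z * z^*) = 0.
    by apply/eqP; rewrite eq_le zz0; move: zz; rewrite lecE => /andP[].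
  by apply/eqP; rewrite -mul_conjC_eq0 (complex_ge0_real zz) re0.
suff small (e : R) : 0 < e -> complex.Re (z * z^*) <= 0 + e by apply/ler_addgt0Pr.
move=> e0; have eC : 0 < e / (C + 1) by rewrite divr_gt0 // ltr_wpDl.
have [N hN] := cvg_to_sqnorm hV cvu eC.
have zN : z * z^* = phi (u N - k) * (phi (u N - k))^*.
  by rewrite phiB phiu sub0r rmorphN mulrNN.
rewrite zN add0r; apply: le_trans (phi_bounded _) _.
have := hN N (leqnn N); rewrite ltr_pdivlMr ?ltr_wpDl // => hl.
have := sqnorm_ge0 hV (u N - k); nra.
Qed.

Lemma functional_ker_orthogonal : (exists y, phi y != 0) ->
  exists v, phi v = 1 /\ forall w, phi w = 0 -> ip v w = 0.
Proof.
case=> y0 hy0; set x0 := (phi y0)^-1 *: y0.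
have phix0 : phi x0 = 1 by rewrite phiZ mulVf.
have ker_mid k1 k2 : phi k1 = 0 -> phi k2 = 0 -> phi (2^-1 *: (k1 + k2)) = 0.
  by move=> h1 h2; rewrite phiZ phiD h1 h2 addr0 mulr0.
have [k [phik kmin]] := nearest_point hV x0 ker_mid phi0 functional_ker_closed.
exists (x0 - k); split; first by rewrite phiB phix0 phik subr0.
move=> w phiw; apply: (ip_eq0_of_minimal hV) => t.
rewrite -!(hnorm_sqr hV) ler_sqr ?nnegrE ?hnorm_ge0 //.
rewrite -addrA -opprD; apply: kmin.
by rewrite phiD phiZ phik phiw mulr0 addr0.
Qed.

Lemma riesz_representation : exists u, forall y, phi y = ip y u.
Proof.
case: (pselect (exists y, phi y != 0)); last first.
  move=> phi_eq0; exists 0 => y; rewrite (ip0r hV).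
  by apply/eqP; apply/negPn/negP => hy; apply: phi_eq0; exists y.
move=> /functional_ker_orthogonal [v [phiv v_orth]].
have vv0 : ip v v != 0.
  by apply: contraPneq phiv => /(ip_eq0 hV) ->; rewrite phi0 => /eqP; rewrite eq_sym oner_eq0.
exists ((ip v v)^-1^* *: v) => y; rewrite (ipZr hV) conjCK.
have : ip v (y - phi y *: v) = 0 by apply: v_orth; rewrite phiB phiZ phiv mulr1 subrr.
rewrite (ipBr hV) (ipZr hV) => /eqP; rewrite subr_eq0 => /eqP h.
have -> : ip y v = phi y * ip v v.
  rewrite (ip_hermitian hV) h -[phi y in RHS]conjCK.
  by rewrite -[ip v v in RHS](geC0_conj (ip_ge0 hV v)) -rmorphM.
by field.
Qed.

End Riesz.

Lemma bounded_adjoint_total (R : realType) (V W : lmodType R[i])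
    (ipV : V -> V -> R[i]) (ipW : W -> W -> R[i]) (B : op V W) :
  is_hilbert ipV -> is_hilbert ipW -> linear_rel B -> single_valued B ->
  (forall x, dom B x) -> bounded_op ipV ipW B ->
  forall f, exists z, adjoint ipV ipW B f z.
Proof.
move=> hV hW [_ linB] svB totB [c bdB] f.
have [b hb] := choice totB.
have bL a x y : b (a *: x + y) = a *: b x + b y.
  by apply: (svB (a *: x + y)); [apply: hb | apply: linB].
pose phi x := ipW (b x) f.
have phiL a x y : phi (a *: x + y) = a * phi x + phi y by rewrite /phi bL (ip_linear hW).
have phi_bd y : complex.Re (phi y * (phi y)^*) <= c ^+ 2 * sqnorm ipW f * sqnorm ipV y.
  apply: le_trans (sqr_ip_le hW _ _) _.
  have bd : sqnorm ipW (b y) <= c ^+ 2 * sqnorm ipV y.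
    rewrite -!(hnorm_sqr hW) -(hnorm_sqr hV) -exprMn ler_sqr ?nnegrE ?hnorm_ge0 ?bdB //.
    exact: le_trans (hnorm_ge0 ipW (b y)) (bdB _ _ (hb y)).
  by rewrite mulrAC ler_wpM2r ?sqnorm_ge0.
have [u hu] := riesz_representation hV phiL phi_bd (mulr_ge0 (sqr_ge0 c) (sqnorm_ge0 hW f)).
by exists u => x w Bxw; rewrite -hu /phi (svB x w (b x)).
Qed.

Lemma linear_relB (R : realType) (V W : lmodType R[i]) (A : op V W) x1 y1 x2 y2 :
  linear_rel A -> A x1 y1 -> A x2 y2 -> A (x1 - x2) (y1 - y2).
Proof. by move=> [_ linA] A1 A2; rewrite addrC -scaleN1r (addrC y1) -scaleN1r; apply: linA. Qed.

Lemma linear_rel_resolvent (R : realType) (V : lmodType R[i]) (A : op V V) lam :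
  linear_rel A -> linear_rel (resolvent A lam).
Proof.
move=> [A00 linA]; split.
  by exists 0, 0; do !split => //; [exists 0; rewrite scaler0 | rewrite subrr].
move=> a y1 x1 y2 x2 [w1 [s1 [A1 [[_ [-> ->]] ->]]]] [w2 [s2 [A2 [[_ [-> ->]] ->]]]].
exists (a *: w1 + w2), (lam *: (a *: x1 + x2)); split; first exact: linA.
split; first by exists (a *: x1 + x2).
by rewrite !scalerBr scalerDr !scalerA [lam * a]mulrC opprD addrACA.
Qed.

Section LinearOn.
Variables (R : realType) (V W : lmodType R[i]) (D : V -> Prop) (F : V -> W).
Hypothesis linF : linear_on D F.

Lemma linear_on0 : D 0 -> F 0 = 0.
Proof.
move=> D0; have := linF 1 D0 D0; rewrite scaler0 addr0 scale1r.
by move/(congr1 (fun w => w - F 0)); rewrite subrr addrK => <-.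
Qed.

Lemma linear_onB x y : D x -> D y -> F (x - y) = F x - F y.
Proof. by move=> Dx Dy; rewrite addrC -scaleN1r linF // scaleN1r addrC. Qed.

End LinearOn.

Lemma linear_rel_A0 (R : realType) (H G : lmodType R[i]) (T : op H H) (Gam0 : H -> G) :
  linear_rel T -> linear_on (dom T) Gam0 -> linear_rel (A0_of T Gam0).
Proof.
move=> [T00 linT] linG0; split; first by split=> //; apply: linear_on0 linG0 _; exists 0.
move=> a x1 y1 x2 y2 [T1 G1] [T2 G2]; split; first exact: linT.
by rewrite linG0 ?G1 ?G2 ?scaler0 ?addr0 //; [exists y1 | exists y2].
Qed.

Lemma adjoint_resolvent (R : realType) (V : lmodType R[i]) (ip : V -> V -> R[i])
    (A : op V V) mu f u : is_hilbert ip ->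
  adjoint ip ip (resolvent A mu) f u -> adjoint ip ip A u (mu^* *: u + f).
Proof.
move=> hV adj x w Axw.
have r : resolvent A mu (w - mu *: x) x.
  by exists w, (mu *: x); do !split => //; exists x.
by rewrite (ipDr hV) (ipZr hV) conjCK (adj _ _ r) (ipBl hV) (ipZl hV) addrC subrK.
Qed.

Section GammaField.
Variables (R : realType) (H G : lmodType R[i]) (ipH : H -> H -> R[i]) (ipG : G -> G -> R[i]).
Variables (T : op H H) (Gam0 Gam1 : H -> G).
Hypotheses (opT : is_operator T) (linG0 : linear_on (dom T) Gam0).
Local Notation rho := (resolvent_set ipH (A0_of T Gam0)).
Local Notation gamma := (gamma_field T Gam0).
Local Notation M := (weyl_fun T Gam0 Gam1).

Lemma gamma_field_total lam f : rho lam -> dom T f ->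
  exists g, T g (lam *: g) /\ Gam0 g = Gam0 f.
Proof.
move=> [_ [tot _]] [y Tfy].
have [f0 [y1 [y2 [[Tf0 G0f0] [[_ [-> ->]] hy]]]]] := tot (y - lam *: f).
exists (f - f0); split.
  have -> : lam *: (f - f0) = y - y1.
    rewrite -[y](subrK (lam *: f)) hy scalerBr.
    by rewrite [RHS]addrAC [y1 - _ - _]addrAC subrr add0r addrC.
  exact: linear_relB opT.1 Tfy Tf0.
by rewrite (linear_onB linG0) ?G0f0 ?subr0 //; [exists y | exists y1].
Qed.

Lemma gamma_field_inj lam g1 g2 : rho lam -> T g1 (lam *: g1) -> T g2 (lam *: g2) ->
  Gam0 g1 = Gam0 g2 -> g1 = g2.
Proof.
move=> [sv _] T1 T2 e; apply/eqP; rewrite -subr_eq0; apply/eqP.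
have Tg : T (g1 - g2) (lam *: (g1 - g2)) by rewrite scalerBr; apply: linear_relB opT.1 T1 T2.
have Gg : Gam0 (g1 - g2) = 0.
  by rewrite (linear_onB linG0) ?e ?subrr //; [exists (lam *: g1) | exists (lam *: g2)].
have r00 := (linear_rel_resolvent lam (linear_rel_A0 opT.1 linG0)).1.
apply: (sv 0) r00.
by exists (lam *: (g1 - g2)), (lam *: (g1 - g2)); do !split => //; [exists (g1 - g2) | rewrite subrr].
Qed.

Lemma gamma_field_shift lam0 lam f r : T f (lam0 *: f) ->
    resolvent (A0_of T Gam0) lam f r ->
  T (f + (lam - lam0) *: r) (lam *: (f + (lam - lam0) *: r)) /\
  Gam0 (f + (lam - lam0) *: r) = Gam0 f.
Proof.
move=> Tf [a [b [[Tra G0r] [[_ [-> ->]] hf]]]].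
have ha : a = f + lam *: r by rewrite hf subrK.
split.
  have -> : lam *: (f + (lam - lam0) *: r) = (lam - lam0) *: a + lam0 *: f.
    rewrite ha scalerDr scalerA [in RHS]scalerDr scalerA.
    by rewrite addrAC -scalerDl subrK [lam * _]mulrC.
  by rewrite addrC; apply: opT.1.2.
rewrite addrC linG0 ?G0r ?scaler0 ?add0r //; [by exists a | by exists (lam0 *: f)].
Qed.

Lemma dom_weyl_fun lam h : rho lam -> dom (M lam) h <-> image_on (dom T) Gam0 h.
Proof.
move=> rl; split; first by case=> k [g [[Tg ->] [dg _]]]; exists g.
case=> f [df ->]; have [g [Tg <-]] := gamma_field_total rl df.
by exists (Gam1 g), g; split; split => //; exists (lam *: g).
Qed.

Lemma ran_weyl_fun lam k : ran (M lam) k -> image_on (dom T) Gam1 k.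
Proof. by case=> h [g [_ [dg ->]]]; exists g. Qed.

Lemma weyl_fun_operator lam : linear_on (dom T) Gam1 -> rho lam -> is_operator (M lam).
Proof.
move=> linG1 rl; split; last first.
  move=> h y1 y2 [g1 [[T1 ->] [_ ->]]] [g2 [[T2 e] [_ ->]]].
  by rewrite (gamma_field_inj rl T1 T2 e).
have dT0 : dom T 0 by exists 0; exact: opT.1.1.
split.
  exists 0; split; last by split; [|rewrite (linear_on0 linG1)].
  by split; [rewrite scaler0; exact: opT.1.1 | rewrite (linear_on0 linG0)].
move=> a x1 y1 x2 y2 [g1 [[T1 ->] [d1 ->]]] [g2 [[T2 ->] [d2 ->]]].
have Tg : T (a *: g1 + g2) (lam *: (a *: g1 + g2)).
  by rewrite scalerDr !scalerA mulrC -scalerA; apply: opT.1.2.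
exists (a *: g1 + g2); split; split; rewrite ?linG0 ?linG1 //.
by exists (lam *: (a *: g1 + g2)).
Qed.

Lemma weyl_fun_operator_dom_ran lam : linear_on (dom T) Gam1 ->
    dense ipG (image_on (dom T) Gam0) -> rho lam ->
  is_operator (M lam) /\
  (forall h, dom (M lam) h <-> image_on (dom T) Gam0 h) /\
  dense ipG (dom (M lam)) /\
  (forall k, ran (M lam) k -> image_on (dom T) Gam1 k).
Proof.
move=> linG1 dense0 rl; split; first exact: weyl_fun_operator.
split=> [h|]; first exact: dom_weyl_fun.
split=> [x e e0|]; last exact: ran_weyl_fun.
by have [a [Da ha]] := dense0 x e e0; exists a; split=> //; apply/dom_weyl_fun.
Qed.

End GammaField.

Section WeylFunctionDuality.
Variables (R : realType) (H G : lmodType R[i]).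
Variables (ipH : H -> H -> R[i]) (ipG : G -> G -> R[i]).
Hypotheses (hH : is_hilbert ipH) (hG : is_hilbert ipG).
Variables (T Tt : op H H) (Gam0 Gam1 Gamt0 Gamt1 : H -> G).
Hypotheses (opT : is_operator T) (opTt : is_operator Tt).
Hypotheses (linG0 : linear_on (dom T) Gam0) (linGt0 : linear_on (dom Tt) Gamt0).
Hypothesis green : forall f Tf g Ttg, T f Tf -> Tt g Ttg ->
  ipH g Tf - ipH Ttg f = ipG (Gamt0 g) (Gam1 f) - ipG (Gamt1 g) (Gam0 f).
Hypothesis denseGt0 : dense ipG (image_on (dom Tt) Gamt0).
Hypothesis adjoint_A0t : op_eq (adjoint ipH ipH (A0_of Tt Gamt0)) (A0_of T Gam0).

Local Notation rho := (resolvent_set ipH (A0_of T Gam0)).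
Local Notation rhot := (resolvent_set ipH (A0_of Tt Gamt0)).
Local Notation gamma := (gamma_field T Gam0).
Local Notation gammat := (gamma_field Tt Gamt0).
Local Notation M := (weyl_fun T Gam0 Gam1).
Local Notation Mt := (weyl_fun Tt Gamt0 Gamt1).

Lemma green_eigen lam mu g g' : T g (lam *: g) -> Tt g' (mu *: g') ->
  ipG (Gamt0 g') (Gam1 g) = ipG (Gamt1 g') (Gam0 g) + (lam^* - mu) * ipH g' g.
Proof.
move=> Tg Tg'; have := green Tg Tg'; rewrite (ipZr hH) (ipZl hH) -mulrBl => ->.
by rewrite addrC subrK.
Qed.

Lemma weyl_fun_sub_adjoint lam : op_le (M lam) (adjoint ipG ipG (Mt lam^*)).
Proof.
move=> h k [g [[Tg ->] [_ ->]]] x w [g' [[Tg' ->] [_ ->]]].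
by rewrite (green_eigen Tg Tg') subrr mul0r addr0.
Qed.

Lemma gamma_field_adjoint_total mu : rhot mu ->
  forall f, exists z, adjoint ipG ipH (gammat mu) f z.
Proof.
move=> [sv [tot bd]] f.
(* by (M), the adjoint of (A~0 - mu)^-1 is (A0 - conj mu)^-1 *)
have linR := linear_rel_resolvent mu (linear_rel_A0 opTt.1 linGt0).
have [u /(adjoint_resolvent hH) /adjoint_A0t [Tu G0u]] := bounded_adjoint_total hH hH linR sv tot bd f.
exists (Gam1 u) => x g' [Tg' ->].
have := green Tu Tg'; rewrite G0u (ip0r hG) subr0 => <-.
by rewrite (ipDr hH) (ipZr hH) (ipZl hH) conjCK addrAC subrr add0r.
Qed.

Lemma dense_gamma_field_dom mu : rhot mu ->
  dense ipG (fun x => exists g', Tt g' (mu *: g') /\ x = Gamt0 g').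
Proof.
move=> rm p e e0; have [a [[x [dx ->]] ha]] := denseGt0 p e0.
have [g' [Tg' eg]] := gamma_field_total opTt linGt0 rm dx.
by exists (Gamt0 g'); split; [exists g' | rewrite eg].
Qed.

Lemma weyl_fun_diff_adjoint lam mu : rho lam -> rhot mu ->
  op_eq (op_diff (M lam) (adjoint ipG ipG (Mt mu)))
        (op_scale (lam - mu^*) (op_comp (adjoint ipG ipH (gammat mu)) (gamma lam))).
Proof.
move=> rl rm h y; split.
- case=> y1 [y2 [[g [[Tg ->] [dg ->]]] [hy2 ->]]].
  have [z hz] := gamma_field_adjoint_total rm g.
  exists z; split; first by exists g; split.
  apply/eqP; rewrite -subr_eq0; apply/eqP.
  apply: (dense_orthogonal_eq0 hG (dense_gamma_field_dom rm)) => x [g' [Tg' ->]].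
  have e2 : ipG (Gamt0 g') y2 = ipG (Gamt1 g') (Gam0 g).
    by symmetry; apply: hy2; exists g'; split; split => //; exists (mu *: g').
  have e3 : ipG (Gamt0 g') z = ipH g' g by symmetry; apply: hz; split.
  rewrite !(ipBr hG) (ipZr hG) e2 e3 (green_eigen Tg Tg') conjCB conjCK; ring.
- case=> y' [[f [[Tf ->] hz]] ->].
  exists (Gam1 f), (Gam1 f - (lam - mu^*) *: y'); split.
    by exists f; split; split => //; exists (lam *: f).
  split; last by rewrite opprB addrCA subrr addr0.
  move=> x w [g' [[Tg' ->] [_ ->]]].
  have e3 : ipG (Gamt0 g') y' = ipH g' f by symmetry; apply: hz; split.
  rewrite (ipBr hG) (ipZr hG) e3 (green_eigen Tf Tg') conjCB conjCK; ring.
Qed.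

Lemma weyl_fun_resolvent_formula lam0 lam : rho lam0 -> rhot lam0 -> rho lam ->
  op_eq (M lam)
    (op_sum (adjoint ipG ipG (Mt lam0))
       (op_comp (adjoint ipG ipH (gammat lam0))
          (op_comp (op_scale (lam - lam0^*)
             (op_sum (@op_id H) (op_scale (lam - lam0) (resolvent (A0_of T Gam0) lam))))
             (gamma lam0)))).
Proof.
move=> r0 rt0 rl h k; split.
- case=> g [[Tg ->] [dg ->]].
  have [f [Tf ef]] := gamma_field_total opT linG0 r0 dg.
  have [_ [tot _]] := rl; have [r hr] := tot f.
  have [Tfl Gfl] := gamma_field_shift opT linG0 Tf hr.
  have efl : f + (lam - lam0) *: r = g.
    by apply: (gamma_field_inj opT linG0 rl Tfl Tg); rewrite Gfl ef.
  have [y2 hy2] := gamma_field_adjoint_total rt0 ((lam - lam0^*) *: g).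
  exists (Gam1 g - y2), y2; split; last split; last by rewrite subrK.
    move=> x w [g' [[Tg' ->] [_ ->]]].
    have e3 : ipG (Gamt0 g') y2 = ipH g' ((lam - lam0^*) *: g).
      by symmetry; apply: hy2; split.
    rewrite (ipBr hG) e3 (ipZr hH) (green_eigen Tg Tg') conjCB conjCK; ring.
  exists ((lam - lam0^*) *: g); split => //.
  exists f; split; first by split => //; rewrite ef.
  exists (f + (lam - lam0) *: r); split; last by rewrite efl.
  by exists f, ((lam - lam0) *: r); do !split => //; exists r.
- case=> y1 [y2 [hy1 [[v [[f [[Tf eh] [v1 [[a [b [-> [[r [hr ->]] ->]]]] ->]]]] hv]] ->]]].
  subst h.
  have [Tfl Gfl] := gamma_field_shift opT linG0 Tf hr.
  exists (f + (lam - lam0) *: r); split; first by split => //; rewrite Gfl.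
  split; first by exists (lam *: (f + (lam - lam0) *: r)).
  apply/eqP; rewrite eq_sym -subr_eq0; apply/eqP.
  apply: (dense_orthogonal_eq0 hG (dense_gamma_field_dom rt0)) => x [g' [Tg' ->]].
  have e1 : ipG (Gamt0 g') y1 = ipG (Gamt1 g') (Gam0 f).
    by symmetry; apply: hy1; exists g'; split; split => //; exists (lam0 *: g').
  have e2 : ipG (Gamt0 g') y2 = ipH g' ((lam - lam0^*) *: (f + (lam - lam0) *: r)).
    by symmetry; apply: hv; split.
  rewrite (ipBr hG) (ipDr hG) e1 e2 (ipZr hH) (green_eigen Tfl Tg') Gfl conjCB conjCK; ring.
Qed.

End WeylFunctionDuality.

Lemma op_diff_swap (R : realType) (V W : lmodType R[i]) (A B X : op V W) (c : R[i]) :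
  op_eq (op_diff A B) (op_scale c X) -> op_eq (op_diff B A) (op_scale (- c) X).
Proof.
move=> e x y; split.
- case=> y1 [y2 [hB [hA ->]]].
  have /(e x) [z [hz ez]] : op_diff A B x (y2 - y1) by exists y2, y1.
  by exists z; rewrite scaleNr -ez opprB.
- case=> z [hz ->].
  have /(e x) [y1 [y2 [hA [hB ey]]]] : op_scale c X x (c *: z) by exists z.
  by exists y2, y1; rewrite scaleNr ey opprB.
Qed.

Unset Implicit Arguments.

Theorem proposition3p4
  (R : realType)
  (H : lmodType R[i]) (ipH : H -> H -> R[i])
  (G : lmodType R[i]) (ipG : G -> G -> R[i])
  (hH : is_hilbert ipH) (sepH : separable ipH) (hG : is_hilbert ipG)
  (* the adjoint pair {S, S~} *)
  (S St : op H H)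
  (opS : is_operator S) (clS : closed_op ipH ipH S) (ddS : densely_defined ipH S)
  (opSt : is_operator St) (clSt : closed_op ipH ipH St)
  (ddSt : densely_defined ipH St)
  (adjpair : forall f Sf g Stg, S f Sf -> St g Stg -> ipH Sf g = ipH f Stg)
  (* the cores T of S^* and T~ of S~^* *)
  (T Tt : op H H) (opT : is_operator T) (opTt : is_operator Tt)
  (TS : op_le T (adjoint ipH ipH S)) (TtSt : op_le Tt (adjoint ipH ipH St))
  (coreT : op_eq (op_closure ipH ipH T) (adjoint ipH ipH S))
  (coreTt : op_eq (op_closure ipH ipH Tt) (adjoint ipH ipH St))
  (* the boundary maps *)
  (Gam0 Gam1 Gamt0 Gamt1 : H -> G)
  (linG0 : linear_on (dom T) Gam0) (linG1 : linear_on (dom T) Gam1)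
  (linGt0 : linear_on (dom Tt) Gamt0) (linGt1 : linear_on (dom Tt) Gamt1)
  (* (G) *)
  (condG : forall f Tf g Ttg, T f Tf -> Tt g Ttg ->
     ipH Tf g - ipH f Ttg = ipG (Gam1 f) (Gamt0 g) - ipG (Gam0 f) (Gamt1 g))
  (* (D) *)
  (condD0 : dense ipG (image_on (dom T) Gam0))
  (condDt0 : dense ipG (image_on (dom Tt) Gamt0))
  (* (M) *)
  (condM1 : op_eq (adjoint ipH ipH (A0_of T Gam0)) (A0_of Tt Gamt0))
  (condM2 : op_eq (adjoint ipH ipH (A0_of Tt Gamt0)) (A0_of T Gam0))
  (* rho(A0) nonempty *)
  (rho_ne : exists l, resolvent_set ipH (A0_of T Gam0) l) :
  (* (i) *)
  (forall lam, resolvent_set ipH (A0_of T Gam0) lam ->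
     is_operator (weyl_fun T Gam0 Gam1 lam) /\
     (forall h, dom (weyl_fun T Gam0 Gam1 lam) h <-> image_on (dom T) Gam0 h) /\
     dense ipG (dom (weyl_fun T Gam0 Gam1 lam)) /\
     (forall k, ran (weyl_fun T Gam0 Gam1 lam) k -> image_on (dom T) Gam1 k)) /\
  (forall mu, resolvent_set ipH (A0_of Tt Gamt0) mu ->
     is_operator (weyl_fun Tt Gamt0 Gamt1 mu) /\
     (forall h, dom (weyl_fun Tt Gamt0 Gamt1 mu) h <-> image_on (dom Tt) Gamt0 h) /\
     dense ipG (dom (weyl_fun Tt Gamt0 Gamt1 mu)) /\
     (forall k, ran (weyl_fun Tt Gamt0 Gamt1 mu) k -> image_on (dom Tt) Gamt1 k)) /\
  (* (ii) *)
  (forall lam, resolvent_set ipH (A0_of T Gam0) lam ->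
     op_le (weyl_fun T Gam0 Gam1 lam)
           (adjoint ipG ipG (weyl_fun Tt Gamt0 Gamt1 lam^*)) /\
     op_le (weyl_fun Tt Gamt0 Gamt1 lam^*)
           (adjoint ipG ipG (weyl_fun T Gam0 Gam1 lam))) /\
  (forall lam mu, resolvent_set ipH (A0_of T Gam0) lam ->
     resolvent_set ipH (A0_of Tt Gamt0) mu ->
     op_eq (op_diff (weyl_fun T Gam0 Gam1 lam)
                    (adjoint ipG ipG (weyl_fun Tt Gamt0 Gamt1 mu)))
           (op_scale (lam - mu^*)
              (op_comp (adjoint ipG ipH (gamma_field Tt Gamt0 mu))
                       (gamma_field T Gam0 lam))) /\
     op_eq (op_diff (adjoint ipG ipG (weyl_fun T Gam0 Gam1 lam))
                    (weyl_fun Tt Gamt0 Gamt1 mu))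
           (op_scale (lam^* - mu)
              (op_comp (adjoint ipG ipH (gamma_field T Gam0 lam))
                       (gamma_field Tt Gamt0 mu)))) /\
  (* (iii) *)
  (forall lam0 lam, resolvent_set ipH (A0_of T Gam0) lam0 ->
     resolvent_set ipH (A0_of Tt Gamt0) lam0 ->
     resolvent_set ipH (A0_of T Gam0) lam ->
     op_eq (weyl_fun T Gam0 Gam1 lam)
       (op_sum (adjoint ipG ipG (weyl_fun Tt Gamt0 Gamt1 lam0))
          (op_comp (adjoint ipG ipH (gamma_field Tt Gamt0 lam0))
             (op_comp
                (op_scale (lam - lam0^*)
                   (op_sum (@op_id H)
                      (op_scale (lam - lam0) (resolvent (A0_of T Gam0) lam))))
                (gamma_field T Gam0 lam0))))) /\
  (forall mu0 mu, resolvent_set ipH (A0_of T Gam0) mu0 ->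
     resolvent_set ipH (A0_of Tt Gamt0) mu0 ->
     resolvent_set ipH (A0_of Tt Gamt0) mu ->
     op_eq (weyl_fun Tt Gamt0 Gamt1 mu)
       (op_sum (adjoint ipG ipG (weyl_fun T Gam0 Gam1 mu0))
          (op_comp (adjoint ipG ipH (gamma_field T Gam0 mu0))
             (op_comp
                (op_scale (mu - mu0^*)
                   (op_sum (@op_id H)
                      (op_scale (mu - mu0) (resolvent (A0_of Tt Gamt0) mu))))
                (gamma_field Tt Gamt0 mu0))))).

Proof.
(* (G) read from either side, so that the duality lemmas apply to both triples *)
have green f Tf g Ttg : T f Tf -> Tt g Ttg ->
    ipH g Tf - ipH Ttg f = ipG (Gamt0 g) (Gam1 f) - ipG (Gamt1 g) (Gam0 f).
  move=> Tf' Ttg'; have := congr1 Num.conj (condG _ _ _ _ Tf' Ttg').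
  by rewrite !conjCB -!(ip_hermitian hH) -!(ip_hermitian hG).
have greent f Tf g Ttg : Tt f Tf -> T g Ttg ->
    ipH g Tf - ipH Ttg f = ipG (Gam0 g) (Gamt1 f) - ipG (Gam1 g) (Gamt0 f).
  by move=> Tf' Ttg'; rewrite -[LHS]opprB (condG _ _ _ _ Ttg' Tf') opprB.
split; first by move=> lam; apply: weyl_fun_operator_dom_ran.
split; first by move=> mu; apply: weyl_fun_operator_dom_ran.
split.
  move=> lam _; split; first exact: (weyl_fun_sub_adjoint hH green).
  by have := weyl_fun_sub_adjoint hH greent (lam := lam^*); rewrite conjCK.
split.
  move=> lam mu rl rm; split; first exact: weyl_fun_diff_adjoint.
  have := weyl_fun_diff_adjoint hH hG opT linG0 greent condD0 condM1 rm rl.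
  by move/op_diff_swap; rewrite opprB.
split=> [lam0 lam|mu0 mu] r0 rt0 rl; first exact: weyl_fun_resolvent_formula.
exact: weyl_fun_resolvent_formula.
Qed.
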